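(* If $\zeta'\le\zeta''$ (coordinatewise) are two configurations in $\{0,1\}^H$, then $\Delta^{\zeta''}\subset\Delta^{\zeta'}$. In particular, if for some $L>0$ and $\delta>0$ the configuration $\zeta'$ is $(L,\delta)$-good on $H$, then $\zeta''$ is also $(L,\delta)$-good on $H$.
   Context: Fix $\lambda>0$, $d\ge2$, $H=\{0,1\}^d\subset\mathbb{Z}^d$; for $x\in H$ let $\mathcal{N}_{H,x}$ be the set of nearest neighbours of $x$ lying in $H$. Each site carries independent Poisson processes of rate $1$ (down marks) and rate $\lambda$ (up marks), independent over sites; $\mathbb{P}$ is the underlying probability, and all processes below are built from the same marks. For $\zeta\in\{0,1\}^H$, the threshold $2$ contact process $(\eta^\zeta_{H;t})_{t\ge0}$ starts from $\zeta$; at a down mark at $x$ the spin becomes $0$; at an up mark at $x$ at time $t$ the spin becomes $1$ if at least $2$ sites of $\mathcal{N}_{H,x}$ are in state $1$ just before $t$. The independent flip process $(\pi^\zeta_{H;t})$ starts from $\zeta$ and sets the spin at $x$ to $0$ at each down mark and to $1$ at each up mark. $\Delta^\zeta=\bigcup_{t\in[0,d^2]}\{x\in H:\eta^\zeta_{H;t}(x)\ne\pi^\zeta_{H;t}(x)\}$. A set $S$ is $L$-thin in $H$ if $|S\cap\mathcal{N}_{H,x}|\le L$ for all $x\in H$; $\zeta$ is $(L,\delta)$-good on $H$ if $\mathbb{P}(\Delta^\zeta\text{ is }L\text{-thin in }H)\ge1-\delta$. *)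

From HB Require Import structures.
From mathcomp Require Import all_boot all_order all_algebra.
From mathcomp Require Import all_classical all_reals all_analysis.
From mathcomp Require Import poisson_distribution.

Set Implicit Arguments.
Unset Strict Implicit.
Unset Printing Implicit Defensive.

Import Order.TTheory GRing.Theory Num.Theory.
Local Open Scope ring_scope.

(* The hypercube H = {0,1}^d, a site being the vector of its d coordinates. *)
Definition cube (d : nat) := {ffun 'I_d -> bool}.

(* y is a nearest neighbour of x in Z^d lying in H:
   x and y differ in exactly one coordinate. *)
Definition nbr (d : nat) (x y : cube d) : bool := #|[set i | x i != y i]| == 1%N.

Definition config (d : nat) := {ffun cube d -> bool}.

Definition config_le (d : nat) (z1 z2 : config d) : Prop := forall x, z1 x ==> z2 x.

(* A realisation of the marks on the time window [0, d^2]: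
   marks x false = times of the down marks (rate 1) at x,
   marks x true  = times of the up marks (rate lambda) at x. *)
Definition markfam (R : realType) (d : nat) := cube d -> bool -> seq R.

Definition window (R : realType) (d : nat) : R := (d ^ 2)%:R.

Definition events (R : realType) (d : nat) (m : markfam R d) : seq (R * (cube d * bool)) :=
  flatten [seq [seq (t, xb) | t <- m xb.1 xb.2] | xb <- enum [set: (cube d * bool)%type]].

Definition events_upto (R : realType) (d : nat) (m : markfam R d) (t : R) :=
  sort (fun e1 e2 : R * (cube d * bool) => e1.1 <= e2.1)
       [seq e <- events m | e.1 <= t].

Definition setspin (d : nat) (eta : config d) (x : cube d) (b : bool) : config d :=
  [ffun y => if y == x then b else eta y].

(* threshold-2 contact process update at a mark, using the state just before *)
Definition thr_step (R : realType) (d : nat) (eta : config d) (e : R * (cube d * bool)) : config d :=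
  let x := e.2.1 in
  if e.2.2 then
    (if (2 <= #|[set y | nbr x y & eta y]|)%N then setspin eta x true else eta)
  else setspin eta x false.

Definition ind_step (R : realType) (d : nat) (eta : config d) (e : R * (cube d * bool)) : config d :=
  setspin eta e.2.1 e.2.2.

Definition eta_proc (R : realType) (d : nat) (zeta : config d) (m : markfam R d) (t : R) : config d :=
  foldl (@thr_step R d) zeta (events_upto m t).

Definition pi_proc (R : realType) (d : nat) (zeta : config d) (m : markfam R d) (t : R) : config d :=
  foldl (@ind_step R d) zeta (events_upto m t).

Definition Delta (R : realType) (d : nat) (zeta : config d) (m : markfam R d) : {set cube d} :=
  [set x | `[< exists t : R, 0 <= t <= window R d /\
                             eta_proc zeta m t x != pi_proc zeta m t x >]].

Definition thin (d : nat) (L : nat) (S : {set cube d}) : Prop :=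
  forall x : cube d, (#|[set y | nbr x y & y \in S]| <= L)%N.

Definition cnt (R : realType) (s : seq R) (a b : R) : nat :=
  count (fun t => (a <= t) && (t < b)) s.

Definition mrate (R : realType) (lambda : R) (up : bool) : R := if up then lambda else 1.

(* The random marks (restricted to [0, d^2]) are independent Poisson processes,
   of rate 1 (down marks) and rate lambda (up marks), independent over sites:
   the joint law of the counts in any finite family of intervals which are
   disjoint whenever they concern the same (site, type) is the product of
   Poisson laws with parameters rate * length. *)
Definition poisson_marks (R : realType) (dT : measure_display) (T : measurableType dT)
    (P : probability T R) (d : nat) (lambda : R) (marks : T -> markfam R d) : Prop :=
  (forall w x up, all (fun t => 0 <= t <= window R d) (marks w x up)) /\
  forall (n : nat) (site : 'I_n -> cube d) (typ : 'I_n -> bool) (a b : 'I_n -> R)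
         (k : 'I_n -> nat),
    (forall i, 0 <= a i /\ a i < b i /\ b i <= window R d) ->
    (forall i j, i != j -> site i = site j -> typ i = typ j ->
                 b i <= a j \/ b j <= a i) ->
    measurable [set w | forall i, cnt (marks w (site i) (typ i)) (a i) (b i) = k i]%classic /\
    P [set w | forall i, cnt (marks w (site i) (typ i)) (a i) (b i) = k i]%classic
    = (\prod_(i < n) poisson_pmf (mrate lambda (typ i) * (b i - a i)) (k i))%:E.

Definition good (R : realType) (dT : measure_display) (T : measurableType dT)
    (P : probability T R) (d : nat) (marks : T -> markfam R d) (L : nat) (delta : R)
    (zeta : config d) : Prop :=
  ((1 - delta)%:E <= P [set w | thin L (Delta zeta (marks w))]%classic)%E.

From HB Require Import structures.
From mathcomp Require Import all_boot all_order all_algebra.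
From mathcomp Require Import all_classical all_reals all_analysis.
From mathcomp Require Import poisson_distribution.
Import Order.TTheory GRing.Theory Num.Theory.
Local Open Scope ring_scope.

(* The threshold-2 dynamics is attractive and dominated by the
   independent flips, so eta' <= eta'' and eta <= pi along the common marks. A site that has
   received no mark keeps its initial spin in both processes (so eta = pi there), whereas after
   its first mark the independent flips started from zeta' and zeta'' agree there. Hence if
   eta'' x <> pi'' x then x has been marked, eta'' x = 0 < 1 = pi'' x = pi' x and eta' x = 0. *)

Section Coupling.
Variables (R : realType) (d : nat).
Implicit Types (eta pi z : config d) (e : R * (cube d * bool))
               (s : seq (R * (cube d * bool))) (x : cube d).

Definition marked_at x := [pred e : R * (cube d * bool) | e.2.1 == x].

Lemma setspin_le eta1 eta2 x b1 b2 :
  config_le eta1 eta2 -> b1 ==> b2 -> config_le (setspin eta1 x b1) (setspin eta2 x b2).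
Proof. by move=> le12 b12 y; rewrite !ffunE; case: eqP. Qed.

Lemma thr_step_mono eta1 eta2 e :
  config_le eta1 eta2 -> config_le (thr_step eta1 e) (thr_step eta2 e).
Proof.
case: e => t [x [|]] le12; rewrite /thr_step /=; last exact: setspin_le.
have card_le : (#|[set y | nbr x y & eta1 y]| <= #|[set y | nbr x y & eta2 y]|)%N.
  apply/subset_leq_card/fintype.subsetP => y; rewrite !inE => /andP[-> /=].
  exact: implyP (le12 y).
case: ifP => [c1 | _]; first by rewrite (leq_trans c1 card_le); exact: setspin_le.
case: ifP => _ y; rewrite ?ffunE; last exact: le12 y.
by case: eqP => _; rewrite ?implybT ?le12.
Qed.

Lemma thr_step_le_ind_step eta pi e :
  config_le eta pi -> config_le (thr_step eta e) (ind_step pi e).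
Proof.
case: e => t [x b] le_eta_pi; rewrite /thr_step /ind_step /=.
case: b; last exact: setspin_le.
by case: ifP => _ y; rewrite ?ffunE; case: eqP => _; rewrite ?implybT ?le_eta_pi.
Qed.

Lemma foldl_thr_step_mono s eta1 eta2 :
  config_le eta1 eta2 ->
  config_le (foldl (@thr_step R d) eta1 s) (foldl (@thr_step R d) eta2 s).
Proof. by elim: s eta1 eta2 => [|e s IH] //= eta1 eta2 /(thr_step_mono _ _ e)/IH. Qed.

Lemma foldl_thr_step_le_ind_step s eta pi :
  config_le eta pi ->
  config_le (foldl (@thr_step R d) eta s) (foldl (@ind_step R d) pi s).
Proof. by elim: s eta pi => [|e s IH] //= eta pi /(thr_step_le_ind_step _ _ e)/IH. Qed.

Lemma thr_step_unmarked eta e x : ~~ marked_at x e -> thr_step eta e x = eta x.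
Proof.
case: e => t [y [|]]; rewrite /= /thr_step /setspin /= => nxy; last first.
  by rewrite ffunE eq_sym (negbTE nxy).
by case: ifP; rewrite // ffunE eq_sym (negbTE nxy).
Qed.

Lemma ind_step_unmarked pi e x : ~~ marked_at x e -> ind_step pi e x = pi x.
Proof. by case: e => t [y b]; rewrite /= /ind_step ffunE eq_sym => /negbTE ->. Qed.

Lemma foldl_thr_step_unmarked s eta x :
  ~~ has (marked_at x) s -> foldl (@thr_step R d) eta s x = eta x.
Proof.
elim: s eta => [|e s IH] //= eta; rewrite negb_or => /andP[ne ns].
by rewrite IH // thr_step_unmarked.
Qed.

Lemma foldl_ind_step_unmarked s pi x :
  ~~ has (marked_at x) s -> foldl (@ind_step R d) pi s x = pi x.
Proof.
elim: s pi => [|e s IH] //= pi; rewrite negb_or => /andP[ne ns].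
by rewrite IH // ind_step_unmarked.
Qed.

Lemma ind_step_agree pi1 pi2 e x :
  pi1 x = pi2 x -> ind_step pi1 e x = ind_step pi2 e x.
Proof. by case: e => t [y b] eq12; rewrite /ind_step !ffunE; case: eqP. Qed.

Lemma foldl_ind_step_agree s pi1 pi2 x :
  pi1 x = pi2 x -> foldl (@ind_step R d) pi1 s x = foldl (@ind_step R d) pi2 s x.
Proof. by elim: s pi1 pi2 => [|e s IH] //= pi1 pi2 /(ind_step_agree _ _ e)/IH. Qed.

Lemma foldl_ind_step_marked s pi1 pi2 x :
  has (marked_at x) s -> foldl (@ind_step R d) pi1 s x = foldl (@ind_step R d) pi2 s x.
Proof.
elim: s pi1 pi2 => [|e s IH] //= pi1 pi2 /orP[/eqP exy | ms]; last exact: IH.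
by apply: foldl_ind_step_agree; rewrite /ind_step !ffunE -exy eqxx.
Qed.

Lemma Delta_antitone z1 z2 (m : markfam R d) :
  config_le z1 z2 -> Delta z2 m \subset Delta z1 m.
Proof.
move=> le12; apply/fintype.subsetP => x; rewrite !inE => -[t [t_win diff2]].
exists t; split=> //; move: diff2.
rewrite /eta_proc /pi_proc; set s := events_upto m t.
have [ms | nms] := boolP (has (marked_at x) s); last first.
  by rewrite foldl_thr_step_unmarked // foldl_ind_step_unmarked // eqxx.
rewrite (foldl_ind_step_marked _ z1 z2 _ ms).
have := foldl_thr_step_mono s _ _ le12 x.
have := foldl_thr_step_le_ind_step s _ _ (fun y => implybb (z2 y)) x.
by case: (foldl (@thr_step R d) z1 s x); case: (foldl (@thr_step R d) z2 s x);
   case: (foldl (@ind_step R d) z2 s x).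
Qed.

End Coupling.

Lemma thin_subset (d L : nat) (S1 S2 : {set cube d}) :
  S1 \subset S2 -> thin L S2 -> thin L S1.
Proof.
move=> sub12 thin2 x; apply: leq_trans (thin2 x); apply/subset_leq_card/fintype.subsetP => y.
by rewrite !inE => /andP[-> /(fintype.subsetP sub12)].
Qed.

Theorem lemma4p2 (R : realType) (dT : measure_display) (T : measurableType dT)
    (P : probability T R) (lambda : R) (d : nat)
    (marks : T -> markfam R d) :
  0 < lambda -> (2 <= d)%N ->
  poisson_marks P lambda marks ->
  (forall (zeta : config d) (L : nat),
      measurable [set w | thin L (Delta zeta (marks w))]%classic) ->
  forall zeta1 zeta2 : config d, config_le zeta1 zeta2 ->
  (forall w : T, Delta zeta2 (marks w) \subset Delta zeta1 (marks w)) /\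
  (forall (L : nat) (delta : R), (0 < L)%N -> 0 < delta ->
      good P marks L delta zeta1 -> good P marks L delta zeta2).
Proof.
move=> _ _ _ thin_meas z1 z2 le12.
have sub w : Delta z2 (marks w) \subset Delta z1 (marks w) by exact: Delta_antitone.
split=> // L delta _ _ good1; apply: (le_trans good1).
apply: le_measure; rewrite ?inE ?thin_meas //.
by move=> w /=; exact: (@thin_subset _ _ _ _ (sub w)).
Qed.
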